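(* Let $n\ge2$ and $H>1$. There is a constant $c(n,H)$, depending only on $n$ and $H$, with the following property. For every $\mu>0$, let $\varphi$ be the profile function of the hyperbolic Delaunay unduloid $\mathcal{D}_H(\mu)$ and let $V$ be the potential of its stability operator. Then $V\tan^2\varphi\le c(n,H)$ everywhere on $\mathcal{D}_H(\mu)$.
   Context: Use the upper half-space model of $\mathbb{H}^{n+1}$. For $\mu>0$ and $H>1$, let $\varphi:\mathbb{R}\to(0,\pi/2)$ be a solution of $$\mu=\frac{(\tan\varphi)^{n-1}}{\cos\varphi\sqrt{1+\varphi'^2}}-H(\tan\varphi)^n.$$ The hyperbolic Delaunay unduloid $\mathcal{D}_H(\mu)$ is parametrized by $\Phi(t,\omega)=(e^t\sin\varphi(t)\omega,e^t\cos\varphi(t))$, $\omega\in S^{n-1}$. It has constant (normalized) mean curvature $H$. Its stability operator is $L=\Delta-V$, where $\Delta$ is the non-negative Laplacian and $V=\|B\|^2-n$. Here $\|B\|$ is the norm of the second fundamental form, and $V\circ\Phi = n(H^2-1)+n(n-1)\mu^2(\tan\varphi)^{-2n}$. *)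

From Stdlib Require Import Reals Lra Lia.
From Coquelicot Require Import Coquelicot.
Open Scope R_scope.

Definition delaunay_profile (n : nat) (H mu : R) (phi : R -> R) : Prop :=
  (forall t, 0 < phi t < PI / 2) /\
  (forall t, ex_derive phi t) /\
  (forall t, mu = tan (phi t) ^ (n - 1)
                   / (cos (phi t) * sqrt (1 + (Derive phi t) ^ 2))
                  - H * tan (phi t) ^ n).

(* The potential V = ||B||^2 - n of the stability operator, evaluated at
   Phi(t, omega) (it does not depend on omega):
     V o Phi = n (H^2 - 1) + n (n-1) mu^2 (tan phi)^(-2n). *)
Definition stability_potential (n : nat) (H mu : R) (phi : R -> R) (t : R) : R :=
  INR n * (H ^ 2 - 1) + INR n * (INR n - 1) * mu ^ 2 / tan (phi t) ^ (2 * n).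

From Stdlib Require Import Reals.
From Stdlib Require Import Lra Lia Psatz.
From Coquelicot Require Import Coquelicot.
Open Scope R_scope.

(* With x = tan phi and m = mu / x^(n-1), the profile equation reads
   m + H x = sec phi / sqrt (1 + phi'^2) <= sec phi = sqrt (1 + x^2).
   Both summands are positive, so (H^2 - 1) x^2 <= 1 and m^2 <= 1 + x^2 are
   bounded in terms of H alone, while V tan^2 phi = n (H^2 - 1) x^2 + n (n-1) m^2. *)

Lemma sqr_le_of_le_sqrt (a c : R) : 0 <= a -> 0 <= c -> a <= sqrt c -> a ^ 2 <= c.
Proof.
  intros ha hc hac.
  apply sqrt_le_0; [apply pow2_ge_0 | exact hc |].
  now rewrite sqrt_pow2.
Qed.

Lemma sec_eq_sqrt_1_add_tan_sqr (p : R) : 0 < cos p -> / cos p = sqrt (1 + tan p ^ 2).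
Proof.
  intros hc.
  rewrite (Rtrigo_facts.cos_tan p hc), Rdiv_1_l, Rinv_inv.
  now rewrite <- Rsqr_pow2.
Qed.

Lemma delaunay_profile_cos_tan_pos (n : nat) (H mu : R) (phi : R -> R) (t : R) :
  delaunay_profile n H mu phi -> 0 < cos (phi t) /\ 0 < tan (phi t).
Proof.
  intros [hrange _]; specialize (hrange t).
  assert (hc : 0 < cos (phi t)) by (apply cos_gt_0; lra).
  assert (hs : 0 < sin (phi t)) by (apply sin_gt_0; pose proof PI_RGT_0; lra).
  split; [exact hc | now apply Rdiv_lt_0_compat].
Qed.

Lemma delaunay_profile_sum_le_sec (n : nat) (H mu : R) (phi : R -> R) (t : R) :
  (1 <= n)%nat -> delaunay_profile n H mu phi ->
  mu / tan (phi t) ^ (n - 1) + H * tan (phi t) <= / cos (phi t).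
Proof.
  intros hn hprof.
  destruct (delaunay_profile_cos_tan_pos n H mu phi t hprof) as [hc hx].
  destruct hprof as [_ [_ hode]]; specialize (hode t).
  set (x := tan (phi t)) in hx, hode |- *.
  set (c := cos (phi t)) in hc, hode |- *.
  set (s := sqrt (1 + Derive phi t ^ 2)) in hode.
  assert (hs : 1 <= s).
  { rewrite <- sqrt_1; apply sqrt_le_1_alt; pose proof (pow2_ge_0 (Derive phi t)); lra. }
  assert (hy : 0 < x ^ (n - 1)) by now apply pow_lt.
  assert (hxn : x ^ n = x * x ^ (n - 1)) by (rewrite tech_pow_Rmult; f_equal; lia).
  replace (mu / x ^ (n - 1) + H * x) with (/ (c * s)) by (rewrite hode, hxn; field; lra).
  apply Rinv_le_contravar; [exact hc | nra].
Qed.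

Lemma potential_mul_tan_sqr (n : nat) (H mu : R) (phi : R -> R) (t : R) :
  (1 <= n)%nat -> 0 < tan (phi t) ->
  stability_potential n H mu phi t * tan (phi t) ^ 2 =
  INR n * ((H ^ 2 - 1) * tan (phi t) ^ 2)
  + INR n * (INR n - 1) * (mu / tan (phi t) ^ (n - 1)) ^ 2.
Proof.
  intros hn hx; unfold stability_potential.
  set (x := tan (phi t)) in hx |- *.
  assert (hy : 0 < x ^ (n - 1)) by now apply pow_lt.
  replace (x ^ (2 * n)) with (x ^ 2 * (x ^ (n - 1)) ^ 2)
    by (rewrite <- pow_mult, <- pow_add; f_equal; lia).
  field; lra.
Qed.

Theorem lemma3p4 (n : nat) (H : R) (hn : (2 <= n)%nat) (hH : 1 < H) :
  exists c : R,
    forall (mu : R) (phi : R -> R),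
      0 < mu ->
      delaunay_profile n H mu phi ->
      forall t : R, stability_potential n H mu phi t * tan (phi t) ^ 2 <= c.
Proof.
  assert (hK : 2 <= INR n) by (change 2 with (INR 2); now apply le_INR).
  assert (hH2 : 0 < H ^ 2 - 1) by nra.
  exists (INR n + INR n * (INR n - 1) * (1 + / (H ^ 2 - 1))).
  intros mu phi hmu hprof t.
  assert (hn1 : (1 <= n)%nat) by lia.
  destruct (delaunay_profile_cos_tan_pos n H mu phi t hprof) as [hc hx].
  pose proof (delaunay_profile_sum_le_sec n H mu phi t hn1 hprof) as hsum.
  rewrite (sec_eq_sqrt_1_add_tan_sqr _ hc) in hsum.
  rewrite (potential_mul_tan_sqr n H mu phi t hn1 hx).
  set (x := tan (phi t)) in hx, hsum |- *.
  set (m := mu / x ^ (n - 1)) in hsum |- *.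
  assert (hm : 0 < m) by (apply Rdiv_lt_0_compat; [exact hmu | now apply pow_lt]).
  assert (hx1 : 0 <= 1 + x ^ 2) by (pose proof (pow2_ge_0 x); lra).
  assert (hm2 : m ^ 2 <= 1 + x ^ 2) by (apply sqr_le_of_le_sqrt; nra).
  assert (hHx : (H * x) ^ 2 <= 1 + x ^ 2) by (apply sqr_le_of_le_sqrt; nra).
  assert (hx2 : x ^ 2 <= / (H ^ 2 - 1)).
  { apply (Rmult_le_reg_r (H ^ 2 - 1)); [exact hH2 |]; rewrite Rinv_l; nra. }
  assert (INR n * (INR n - 1) * m ^ 2 <= INR n * (INR n - 1) * (1 + / (H ^ 2 - 1)))
    by (apply Rmult_le_compat_l; nra).
  nra.
Qed.
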